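(* Let $X,Y$ be $\mathfrak{Q}$-preordered $\mathfrak{Q}$-subsets. (1) Every $\mathfrak{Q}$-polarity from $X$ to $Y$ (i.e. $\mathfrak{Q}$-Galois connection $f\dashv g$ with $f\colon\mathsf{P}X\to\mathsf{P}^{\dagger}Y$, $g\colon\mathsf{P}^{\dagger}Y\to\mathsf{P}X$) is of the form $\phi_{\uparrow}\dashv\phi^{\downarrow}$ for some $\mathfrak{Q}$-distributor $\phi$ from $X$ to $Y$. (2) Every $\mathfrak{Q}$-axiality from $X$ to $Y$ (i.e. $\mathfrak{Q}$-Galois connection $f\dashv g$ with $f\colon\mathsf{P}X\to\mathsf{P}Y$, $g\colon\mathsf{P}Y\to\mathsf{P}X$) is of the form $\phi^{*}\dashv\phi_{*}$ for some $\mathfrak{Q}$-distributor $\phi$ from $Y$ to $X$. (3) Every dual $\mathfrak{Q}$-axiality from $X$ to $Y$ (i.e. $\mathfrak{Q}$-Galois connection $f\dashv g$ with $f\colon\mathsf{P}^{\dagger}X\to\mathsf{P}^{\dagger}Y$, $g\colon\mathsf{P}^{\dagger}Y\to\mathsf{P}^{\dagger}X$) is of the form $\phi_{\dagger}\dashv\phi^{\dagger}$ for some $\mathfrak{Q}$-distributor $\phi$ from $Y$ to $X$.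
   Context: $(\mathfrak{Q},\&,e)$ is a non-trivial unital quantale (complete lattice with associative multiplication with unit $e$ preserving joins in each variable, $\bot<e$), implications $p\& q\le r\iff p\le r/ q\iff q\le p\backslash r$, $\mathcal{D}\mathfrak{Q}(p,q)=\{u\mid (u/ p)\& p=u=q\&(q\backslash u)\}$. A $\mathfrak{Q}$-subset is a set $X$ with $|\cdot|\colon X\to\mathfrak{Q}$; $\mathbf{1}_q$ is $\{*\}$ with $|*|=q$. A $\mathfrak{Q}$-relation from $X$ to $Y$ is a map $\phi\colon X\times Y\to\mathfrak{Q}$ with $\phi(x,y)\in\mathcal{D}\mathfrak{Q}(|x|,|y|)$, ordered pointwise; composition $(\psi\circ\phi)(x,z)=\bigvee_y(\psi(y,z)/|y|)\&\phi(x,y)$; $\xi\swarrow\phi$ is the largest $\psi'$ with $\psi'\circ\phi\le\xi$ and $\psi\searrow\xi$ the largest $\phi'$ with $\psi\circ\phi'\le\xi$. A $\mathfrak{Q}$-preordered $\mathfrak{Q}$-subset is a $\mathfrak{Q}$-subset $X$ with a $\mathfrak{Q}$-relation $1_X^{\natural}$ on $X$ with $\mathrm{id}_X\le 1_X^{\natural}$ ($\mathrm{id}_X(x,x)=|x|$, else $\bot$) and $1_X^{\natural}\circ 1_X^{\natural}\le 1_X^{\natural}$. A $\mathfrak{Q}$-order-preserving map $h\colon A\to B$ satisfies $|ha|=|a|$ and $1_A^{\natural}(a,a')\le 1_B^{\natural}(ha,ha')$; $h\le k$ means $|a|\le 1_B^{\natural}(ha,ka)$ for all $a$; a $\mathfrak{Q}$-Galois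 connection $h\dashv k$ ($h\colon A\to B$, $k\colon B\to A$ $\mathfrak{Q}$-order-preserving) means $1_A\le kh$ and $hk\le 1_B$. A $\mathfrak{Q}$-distributor from $X$ to $Y$ is a $\mathfrak{Q}$-relation $\phi$ with $1_Y^{\natural}\circ\phi\circ 1_X^{\natural}\le\phi$. $\mathsf{P}X$ consists of $\mathfrak{Q}$-relations $\mu$ from $X$ to some $\mathbf{1}_q$ with $\mu\circ 1_X^{\natural}\le\mu$, $|\mu|=q$, $\mathfrak{Q}$-preorder $1_{\mathsf{P}X}^{\natural}(\mu,\mu')=\mu'\swarrow\mu$; $\mathsf{P}^{\dagger}X$ consists of $\mathfrak{Q}$-relations $\lambda$ from some $\mathbf{1}_q$ to $X$ with $1_X^{\natural}\circ\lambda\le\lambda$, $|\lambda|=q$, $1_{\mathsf{P}^{\dagger}X}^{\natural}(\lambda,\lambda')=\lambda'\searrow\lambda$. For a $\mathfrak{Q}$-distributor $\phi$ from $A$ to $B$: $\phi_{\uparrow}\mu=\phi\swarrow\mu$ ($\mathsf{P}A\to\mathsf{P}^{\dagger}B$), $\phi^{\downarrow}\lambda'=\lambda'\searrow\phi$ ($\mathsf{P}^{\dagger}B\to\mathsf{P}A$), $\phi^{*}\mu'=\mu'\circ\phi$ ($\mathsf{P}B\to\mathsf{P}A$), $\phi_{*}\mu=\mu\swarrow\phi$ ($\mathsf{P}A\to\mathsf{P}B$), $\phi_{\dagger}\lambda'=\phi\searrow\lambda'$ ($\mathsf{P}^{\dagger}B\to\mathsf{P}^{\dagger}A$), $\phi^{\dagger}\lambda=\phi\circ\lambda$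 ($\mathsf{P}^{\dagger}A\to\mathsf{P}^{\dagger}B$). *)

Set Implicit Arguments.
Unset Strict Implicit.

Record Quantale := {
  qcar :> Type;
  qle : qcar -> qcar -> Prop;
  qle_refl : forall a, qle a a;
  qle_antisym : forall a b, qle a b -> qle b a -> a = b;
  qle_trans : forall a b c, qle a b -> qle b c -> qle a c;
  qsup : (qcar -> Prop) -> qcar;
  qsup_ub : forall (S : qcar -> Prop) a, S a -> qle a (qsup S);
  qsup_least : forall (S : qcar -> Prop) b,
      (forall a, S a -> qle a b) -> qle (qsup S) b;
  qmul : qcar -> qcar -> qcar;
  qe : qcar;
  qmul_assoc : forall a b c, qmul a (qmul b c) = qmul (qmul a b) c;
  qmul_e_l : forall a, qmul qe a = a;
  qmul_e_r : forall a, qmul a qe = a;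
  qmul_sup_r : forall a (S : qcar -> Prop),
      qmul a (qsup S) = qsup (fun c => exists b, S b /\ c = qmul a b);
  qmul_sup_l : forall a (S : qcar -> Prop),
      qmul (qsup S) a = qsup (fun c => exists b, S b /\ c = qmul b a);
  qnontrivial : qsup (fun _ => False) <> qe
}.

Section QDefs.
Variable Q : Quantale.

Definition qbot : Q := qsup (fun _ : Q => False).

(* right implication  r / q  :  p & q <= r  <->  p <= r / q *)
Definition rimp (r q : Q) : Q := qsup (fun p => qle (qmul p q) r).
(* left implication  p \ r  :  p & q <= r  <->  q <= p \ r *)
Definition limp (p r : Q) : Q := qsup (fun q => qle (qmul p q) r).

Definition inDQ (p q u : Q) : Prop :=
  qmul (rimp u p) p = u /\ u = qmul q (limp q u).

(** Q-relations between Q-subsets (A, dA) and (B, dB):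
    maps phi : A -> B -> Q with phi a b \in DQ(|a|,|b|). *)
Definition Qrel (A B : Type) (dA : A -> Q) (dB : B -> Q) (phi : A -> B -> Q)
  : Prop := forall a b, inDQ (dA a) (dB b) (phi a b).

Definition rel_le (A B : Type) (phi psi : A -> B -> Q) : Prop :=
  forall a b, qle (phi a b) (psi a b).

Definition rcomp (X Y Z : Type) (dY : Y -> Q)
  (psi : Y -> Z -> Q) (phi : X -> Y -> Q) : X -> Z -> Q :=
  fun x z => qsup (fun r => exists y, r = qmul (rimp (psi y z) (dY y)) (phi x y)).

(* identity relation: id(x,x) = |x|, id(x,y) = bot otherwise *)
Definition rid (X : Type) (dX : X -> Q) : X -> X -> Q :=
  fun x y => qsup (fun r => x = y /\ r = dX x).

(* xi <- phi (written  xi \swarrow phi): the largest Q-relation psi' from B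
   to C with psi' o phi <= xi, for phi : A -> B, xi : A -> C;
   realised as the pointwise join of all such psi'. *)
Definition lres (A B C : Type) (dA : A -> Q) (dB : B -> Q) (dC : C -> Q)
  (xi : A -> C -> Q) (phi : A -> B -> Q) : B -> C -> Q :=
  fun b c => qsup (fun r => exists psi', Qrel dB dC psi' /\
                      rel_le (rcomp dB psi' phi) xi /\ r = psi' b c).

(* psi -> xi (written  psi \searrow xi): the largest Q-relation phi' from A
   to B with psi o phi' <= xi, for psi : B -> C, xi : A -> C. *)
Definition rres (A B C : Type) (dA : A -> Q) (dB : B -> Q) (dC : C -> Q)
  (psi : B -> C -> Q) (xi : A -> C -> Q) : A -> B -> Q :=
  fun a b => qsup (fun r => exists phi', Qrel dA dB phi' /\
                      rel_le (rcomp dB psi phi') xi /\ r = phi' a b).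

End QDefs.

Record QPO (Q : Quantale) := {
  qpo_car :> Type;
  qdeg : qpo_car -> Q;
  qpre : qpo_car -> qpo_car -> Q;
  qpre_rel : Qrel qdeg qdeg qpre;
  qpre_refl : rel_le (rid qdeg) qpre;
  qpre_trans : rel_le (rcomp qdeg qpre qpre) qpre
}.

Arguments qdeg {Q} _ _.
Arguments qpre {Q} _ _ _.

Section Presheaves.
Variable Q : Quantale.

Definition done (q : Q) : unit -> Q := fun _ => q.

(** P X : Q-relations mu from X to some 1_q with mu o 1_X <= mu, |mu| = q *)
Record PX (X : QPO Q) := {
  px_deg : Q;
  px_rel : X -> unit -> Q;
  px_isrel : Qrel (qdeg X) (done px_deg) px_rel;
  px_dist : rel_le (rcomp (qdeg X) px_rel (qpre X)) px_rel
}.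

(** P^dagger X : Q-relations lam from some 1_q to X with 1_X o lam <= lam *)
Record PdX (X : QPO Q) := {
  pdx_deg : Q;
  pdx_rel : unit -> X -> Q;
  pdx_isrel : Qrel (done pdx_deg) (qdeg X) pdx_rel;
  pdx_dist : rel_le (rcomp (qdeg X) (qpre X) pdx_rel) pdx_rel
}.

Definition PX_pre (X : QPO Q) (m m' : PX X) : Q :=
  lres (qdeg X) (done (px_deg m)) (done (px_deg m'))
       (px_rel m') (px_rel m) tt tt.

Definition PdX_pre (X : QPO Q) (l l' : PdX X) : Q :=
  rres (done (pdx_deg l)) (done (pdx_deg l')) (qdeg X)
       (pdx_rel l') (pdx_rel l) tt tt.

Definition qorder_preserving (A B : Type) (dA : A -> Q) (dB : B -> Q)
  (rA : A -> A -> Q) (rB : B -> B -> Q) (h : A -> B) : Prop :=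
  (forall a, dB (h a) = dA a) /\
  (forall a a', qle (rA a a') (rB (h a) (h a'))).

Definition qmap_le (A B : Type) (dA : A -> Q) (rB : B -> B -> Q)
  (h k : A -> B) : Prop := forall a, qle (dA a) (rB (h a) (k a)).

Definition qgalois (A B : Type) (dA : A -> Q) (dB : B -> Q)
  (rA : A -> A -> Q) (rB : B -> B -> Q) (h : A -> B) (k : B -> A) : Prop :=
  qorder_preserving dA dB rA rB h /\ qorder_preserving dB dA rB rA k /\
  qmap_le dA rA (fun a => a) (fun a => k (h a)) /\
  qmap_le dB rB (fun b => h (k b)) (fun b => b).

Definition qdistributor (X Y : QPO Q) (phi : X -> Y -> Q) : Prop :=
  Qrel (qdeg X) (qdeg Y) phi /\
  rel_le (rcomp (qdeg Y) (qpre Y) (rcomp (qdeg X) phi (qpre X))) phi.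

(** The six maps induced by a Q-distributor phi from A to B, given on the
    level of underlying Q-relations (the degree is the one of the argument). *)
(* phi_up mu = phi \swarrow mu   : P A -> P^dagger B *)
Definition dist_up (A B : QPO Q) (phi : A -> B -> Q) (m : PX A)
  : unit -> B -> Q :=
  lres (qdeg A) (done (px_deg m)) (qdeg B) phi (px_rel m).
(* phi^down lam' = lam' \searrow phi   : P^dagger B -> P A *)
Definition dist_down (A B : QPO Q) (phi : A -> B -> Q) (l : PdX B)
  : A -> unit -> Q :=
  rres (qdeg A) (done (pdx_deg l)) (qdeg B) (pdx_rel l) phi.
(* phi^* mu' = mu' o phi   : P B -> P A *)
Definition dist_ustar (A B : QPO Q) (phi : A -> B -> Q) (m : PX B)
  : A -> unit -> Q :=
  rcomp (qdeg B) (px_rel m) phi.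
(* phi_* mu = mu \swarrow phi   : P A -> P B *)
Definition dist_lstar (A B : QPO Q) (phi : A -> B -> Q) (m : PX A)
  : B -> unit -> Q :=
  lres (qdeg A) (qdeg B) (done (px_deg m)) (px_rel m) phi.
(* phi_dagger lam' = phi \searrow lam'   : P^dagger B -> P^dagger A *)
Definition dist_ldag (A B : QPO Q) (phi : A -> B -> Q) (l : PdX B)
  : unit -> A -> Q :=
  rres (done (pdx_deg l)) (qdeg A) (qdeg B) phi (pdx_rel l).
(* phi^dagger lam = phi o lam   : P^dagger A -> P^dagger B *)
Definition dist_udag (A B : QPO Q) (phi : A -> B -> Q) (l : PdX A)
  : unit -> B -> Q :=
  rcomp (qdeg A) phi (pdx_rel l).

End Presheaves.

Arguments px_deg {Q X} _.
Arguments px_rel {Q X} _ _ _.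
Arguments pdx_deg {Q X} _.
Arguments pdx_rel {Q X} _ _ _.

(* Both presheaf constructions are Q-enriched, and the Yoneda embeddings
   [x |-> 1_X(-, x)] into [PX X] and [x |-> 1_X(x, -)] into [PdX X] are fully
   faithful: [1(yoneda x, m) = m x] and [1(l, coyoneda x) = l x].  A Galois
   connection [f -| g] satisfies [1(f a, b) = 1(a, g b)], so reading [f] (or [g])
   on representables defines a distributor [phi], and the Yoneda lemma turns the
   value of the other adjoint, as well as the values of [f] resp. [g] that are
   residuals, into the corresponding residual of [phi] computed pointwise.  The
   remaining side, a composite with [phi], is bounded below by monotonicity and
   above by comparing, through the adjunction, with the presheaf [m o phi]. *)

From Stdlib Require Import Setoid.

Section Quantales.
Context {Q : Quantale}.
Implicit Types a b c p q r u v w : Q.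

Lemma qsup_pair {a b} : qle a b -> qsup (fun x => x = a \/ x = b) = b.
Proof.
  intro Hab. apply qle_antisym.
  - apply qsup_least. intros x [-> | ->]; [exact Hab | apply qle_refl].
  - apply qsup_ub. right; reflexivity.
Qed.

Lemma qmul_le_l a b c : qle a b -> qle (qmul a c) (qmul b c).
Proof.
  intro Hab. rewrite <- (qsup_pair Hab), qmul_sup_l.
  apply qsup_ub. exists a. split; [left |]; reflexivity.
Qed.

Lemma qmul_le_r a b c : qle a b -> qle (qmul c a) (qmul c b).
Proof.
  intro Hab. rewrite <- (qsup_pair Hab), qmul_sup_r.
  apply qsup_ub. exists a. split; [left |]; reflexivity.
Qed.

Lemma rimp_adj p q r : qle (qmul p q) r <-> qle p (rimp r q).
Proof.
  split; intro H.
  - apply qsup_ub. exact H.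
  - apply qle_trans with (qmul (rimp r q) q); [apply qmul_le_l, H |].
    unfold rimp. rewrite qmul_sup_l. apply qsup_least. intros x [b [Hb ->]]. exact Hb.
Qed.

Lemma limp_adj p q r : qle (qmul p q) r <-> qle q (limp p r).
Proof.
  split; intro H.
  - apply qsup_ub. exact H.
  - apply qle_trans with (qmul p (limp p r)); [apply qmul_le_r, H |].
    unfold limp. rewrite qmul_sup_r. apply qsup_least. intros x [b [Hb ->]]. exact Hb.
Qed.

Lemma rimp_cancel r q : qle (qmul (rimp r q) q) r.
Proof. apply rimp_adj, qle_refl. Qed.

Lemma limp_cancel p r : qle (qmul p (limp p r)) r.
Proof. apply limp_adj, qle_refl. Qed.

Lemma rimp_le r r' q : qle r r' -> qle (rimp r q) (rimp r' q).
Proof. intro H. apply rimp_adj. eapply qle_trans; [apply rimp_cancel | exact H]. Qed.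

Lemma limp_le p r r' : qle r r' -> qle (limp p r) (limp p r').
Proof. intro H. apply limp_adj. eapply qle_trans; [apply limp_cancel | exact H]. Qed.

Lemma qe_le_rimp p : qle (qe Q) (rimp p p).
Proof. apply rimp_adj. rewrite qmul_e_l. apply qle_refl. Qed.

Definition dq_src p u : Prop := qmul (rimp u p) p = u.
Definition dq_tgt q u : Prop := u = qmul q (limp q u).

(* The summand of [rcomp] at a middle point of degree [p]. *)
Definition qcomp p c a : Q := qmul (rimp c p) a.

Lemma qcomp_switch {p x c} : dq_src p x -> dq_tgt p c -> qcomp p x c = qmul x (limp p c).
Proof.
  unfold dq_src, dq_tgt, qcomp. intros Hx Hc. rewrite Hc at 1. rewrite qmul_assoc, Hx. reflexivity.
Qed.

Lemma dq_src_qcomp {p b} q c : dq_src p b -> dq_src p (qcomp q c b).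
Proof.
  unfold dq_src, qcomp. intro Hb. apply qle_antisym; [apply rimp_cancel |].
  assert (E : qmul (rimp c q) b = qmul (qmul (rimp c q) (rimp b p)) p)
    by (rewrite <- qmul_assoc, Hb; reflexivity).
  rewrite E at 1. apply qmul_le_l, (proj1 (rimp_adj _ _ _)). rewrite <- E. apply qle_refl.
Qed.

Lemma dq_tgt_qcomp {q r a b} : dq_src q a -> dq_tgt q b -> dq_tgt r a -> dq_tgt r (qcomp q a b).
Proof.
  intros Ha Hb Hr. unfold dq_tgt in *. rewrite (qcomp_switch Ha Hb). apply qle_antisym.
  - rewrite Hr at 1. rewrite <- qmul_assoc. apply qmul_le_r, (proj1 (limp_adj _ _ _)).
    rewrite qmul_assoc, <- Hr. apply qle_refl.
  - apply limp_cancel.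
Qed.

Lemma inDQ_qcomp {p q r a b} : inDQ q r a -> inDQ p q b -> inDQ p r (qcomp q a b).
Proof.
  intros [Ha1 Ha2] [Hb1 Hb2]. split.
  - exact (dq_src_qcomp q a Hb1).
  - exact (dq_tgt_qcomp Ha1 Hb2 Ha2).
Qed.

Lemma qcompA p q a b c : dq_src q b -> dq_tgt q c ->
  qcomp q (qcomp p a b) c = qcomp p a (qcomp q b c).
Proof.
  intros Hb Hc. rewrite (qcomp_switch (dq_src_qcomp p a Hb) Hc), (qcomp_switch Hb Hc).
  unfold qcomp. rewrite qmul_assoc. reflexivity.
Qed.

Lemma qcomp_le_l p c c' a : qle c c' -> qle (qcomp p c a) (qcomp p c' a).
Proof. intro H. apply qmul_le_l, rimp_le, H. Qed.

Lemma qcomp_le_r p c a a' : qle a a' -> qle (qcomp p c a) (qcomp p c a').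
Proof. intro H. apply qmul_le_r, H. Qed.

Lemma qcomp_ge_r p c a : qle p c -> qle a (qcomp p c a).
Proof.
  intro H. unfold qcomp. rewrite <- (qmul_e_l a) at 1. apply qmul_le_l.
  eapply qle_trans; [apply qe_le_rimp | apply rimp_le, H].
Qed.

Lemma qcomp_ge_l p w a : dq_src p w -> qle p a -> qle w (qcomp p w a).
Proof. unfold dq_src, qcomp. intros Hw H. rewrite <- Hw at 1. apply qmul_le_r, H. Qed.

Lemma inDQ_refl p : inDQ p p p.
Proof.
  split; apply qle_antisym.
  - apply rimp_cancel.
  - rewrite <- (qmul_e_l p) at 1. apply qmul_le_l, qe_le_rimp.
  - rewrite <- (qmul_e_r p) at 1. apply qmul_le_r, (proj1 (limp_adj _ _ _)).
    rewrite qmul_e_r. apply qle_refl.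
  - apply limp_cancel.
Qed.

Lemma qcomp_id_l p a : dq_tgt p a -> qcomp p p a = a.
Proof. intro H. rewrite (qcomp_switch (proj1 (inDQ_refl p)) H). symmetry; exact H. Qed.

Lemma qcomp_id_r p w : dq_src p w -> qcomp p w p = w.
Proof. intro H; exact H. Qed.

Lemma dq_src_sup {p} {S : Q -> Prop} : (forall s, S s -> dq_src p s) -> dq_src p (qsup S).
Proof.
  unfold dq_src. intro H. apply qle_antisym; [apply rimp_cancel |].
  apply qsup_least. intros s Hs. rewrite <- (H s Hs) at 1.
  apply qmul_le_l, rimp_le, qsup_ub, Hs.
Qed.

Lemma dq_tgt_sup {q} {S : Q -> Prop} : (forall s, S s -> dq_tgt q s) -> dq_tgt q (qsup S).
Proof.
  unfold dq_tgt. intro H. apply qle_antisym; [| apply limp_cancel].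
  apply qsup_least. intros s Hs. rewrite (H s Hs) at 1.
  apply qmul_le_r, limp_le, qsup_ub, Hs.
Qed.

Lemma inDQ_sup p q (S : Q -> Prop) : (forall s, S s -> inDQ p q s) -> inDQ p q (qsup S).
Proof.
  intro H. split.
  - apply dq_src_sup. intros s Hs. exact (proj1 (H s Hs)).
  - apply dq_tgt_sup. intros s Hs. exact (proj2 (H s Hs)).
Qed.

Lemma qcomp_sup_r_le p c (S : Q -> Prop) v :
  (forall s, S s -> qle (qcomp p c s) v) -> qle (qcomp p c (qsup S)) v.
Proof.
  intro H. unfold qcomp. rewrite qmul_sup_r.
  apply qsup_least. intros r [s [Hs ->]]. apply H, Hs.
Qed.

Lemma qcomp_sup_l_le p (S : Q -> Prop) a v :
  (forall s, S s -> dq_src p s) -> dq_tgt p a ->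
  (forall s, S s -> qle (qcomp p s a) v) -> qle (qcomp p (qsup S) a) v.
Proof.
  intros HS Ha H. rewrite (qcomp_switch (dq_src_sup HS) Ha), qmul_sup_l.
  apply qsup_least. intros r [s [Hs ->]]. rewrite <- (qcomp_switch (HS s Hs) Ha). apply H, Hs.
Qed.

End Quantales.

Section Relations.
Context {Q : Quantale}.

Lemma rcomp_le {X Y Z : Type} (dY : Y -> Q) (psi : Y -> Z -> Q) (phi : X -> Y -> Q) x z v :
  (forall y, qle (qcomp (dY y) (psi y z) (phi x y)) v) -> qle (rcomp dY psi phi x z) v.
Proof. intro H. apply qsup_least. intros r [y ->]. apply H. Qed.

Lemma rcomp_ge {X Y Z : Type} (dY : Y -> Q) (psi : Y -> Z -> Q) (phi : X -> Y -> Q) x y z :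
  qle (qcomp (dY y) (psi y z) (phi x y)) (rcomp dY psi phi x z).
Proof. apply qsup_ub. exists y. reflexivity. Qed.

Lemma Qrel_rcomp {X Y Z : Type} (dX : X -> Q) (dY : Y -> Q) (dZ : Z -> Q)
  (psi : Y -> Z -> Q) (phi : X -> Y -> Q) :
  Qrel dY dZ psi -> Qrel dX dY phi -> Qrel dX dZ (rcomp dY psi phi).
Proof.
  intros Hpsi Hphi x z. apply inDQ_sup. intros s [y ->].
  exact (inDQ_qcomp (Hpsi y z) (Hphi x y)).
Qed.

Lemma rcomp_absorb_r {X Y Z : Type} (dX : X -> Q) (dY : Y -> Q)
  (psi : Y -> Z -> Q) (phi : X -> Y -> Q) (rho : X -> X -> Q) :
  Qrel dX dY phi -> Qrel dX dX rho ->
  (forall x x' y, qle (qcomp (dX x') (phi x' y) (rho x x')) (phi x y)) ->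
  rel_le (rcomp dX (rcomp dY psi phi) rho) (rcomp dY psi phi).
Proof.
  intros Hphi Hrho H x z. apply rcomp_le. intro x'.
  apply qcomp_sup_l_le.
  - intros s [y ->]. apply dq_src_qcomp, (proj1 (Hphi x' y)).
  - exact (proj2 (Hrho x x')).
  - intros s [y ->].
    change (qle (qcomp (dX x') (qcomp (dY y) (psi y z) (phi x' y)) (rho x x'))
                (rcomp dY psi phi x z)).
    rewrite qcompA by (exact (proj1 (Hphi x' y)) || exact (proj2 (Hrho x x'))).
    eapply qle_trans; [apply qcomp_le_r, H | apply rcomp_ge].
Qed.

Lemma rcomp_absorb_l {U Y X : Type} (dY : Y -> Q) (dX : X -> Q)
  (phi : Y -> X -> Q) (lam : U -> Y -> Q) (rho : X -> X -> Q) :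
  (forall y x, dq_src (dY y) (phi y x)) -> (forall u y, dq_tgt (dY y) (lam u y)) ->
  (forall y x x', qle (qcomp (dX x') (rho x' x) (phi y x')) (phi y x)) ->
  rel_le (rcomp dX rho (rcomp dY phi lam)) (rcomp dY phi lam).
Proof.
  intros Hphi Hlam H u x. apply rcomp_le. intro x'.
  apply qcomp_sup_r_le. intros s [y ->].
  change (qle (qcomp (dX x') (rho x' x) (qcomp (dY y) (phi y x') (lam u y)))
              (rcomp dY phi lam u x)).
  rewrite <- qcompA by (apply Hphi || apply Hlam).
  eapply qle_trans; [apply qcomp_le_l, H | apply rcomp_ge].
Qed.

Section Residuals.
Context {A B C : Type} (dA : A -> Q) (dB : B -> Q) (dC : C -> Q).

Lemma lres_inDQ (xi : A -> C -> Q) (phi : A -> B -> Q) b c :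
  inDQ (dB b) (dC c) (lres dA dB dC xi phi b c).
Proof. apply inDQ_sup. intros s [psi' [Hpsi' [_ ->]]]. apply Hpsi'. Qed.

Lemma lres_cancel (xi : A -> C -> Q) (phi : A -> B -> Q) a b c :
  Qrel dA dB phi -> qle (qcomp (dB b) (lres dA dB dC xi phi b c) (phi a b)) (xi a c).
Proof.
  intro Hphi. apply qcomp_sup_l_le.
  - intros s [psi' [Hpsi' [_ ->]]]. exact (proj1 (Hpsi' b c)).
  - exact (proj2 (Hphi a b)).
  - intros s [psi' [_ [Hle ->]]]. eapply qle_trans; [apply rcomp_ge | apply Hle].
Qed.

(* The witness is the relation that is [v] at [(b0, c0)] and [qbot] elsewhere. *)
Lemma lres_greatest (xi : A -> C -> Q) (phi : A -> B -> Q) b0 c0 v :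
  Qrel dA dB phi -> inDQ (dB b0) (dC c0) v ->
  (forall a, qle (qcomp (dB b0) v (phi a b0)) (xi a c0)) ->
  qle v (lres dA dB dC xi phi b0 c0).
Proof.
  intros Hphi Hv H.
  pose (psi := fun b c => qsup (fun r => b = b0 /\ c = c0 /\ r = v)).
  apply qle_trans with (psi b0 c0); [apply qsup_ub; auto |].
  apply qsup_ub. exists psi. split; [| split; [| reflexivity]].
  - intros b c. apply inDQ_sup. intros s [-> [-> ->]]. exact Hv.
  - intros a c. apply rcomp_le. intro b. apply qcomp_sup_l_le.
    + intros s [-> [-> ->]]. exact (proj1 Hv).
    + exact (proj2 (Hphi a b)).
    + intros s [-> [-> ->]]. apply H.
Qed.

Lemma rres_inDQ (psi : B -> C -> Q) (xi : A -> C -> Q) a b :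
  inDQ (dA a) (dB b) (rres dA dB dC psi xi a b).
Proof. apply inDQ_sup. intros s [phi' [Hphi' [_ ->]]]. apply Hphi'. Qed.

Lemma rres_cancel (psi : B -> C -> Q) (xi : A -> C -> Q) a b c :
  qle (qcomp (dB b) (psi b c) (rres dA dB dC psi xi a b)) (xi a c).
Proof.
  apply qcomp_sup_r_le. intros s [phi' [_ [Hle ->]]].
  eapply qle_trans; [apply rcomp_ge | apply Hle].
Qed.

Lemma rres_greatest (psi : B -> C -> Q) (xi : A -> C -> Q) a0 b0 v :
  inDQ (dA a0) (dB b0) v ->
  (forall c, qle (qcomp (dB b0) (psi b0 c) v) (xi a0 c)) ->
  qle v (rres dA dB dC psi xi a0 b0).
Proof.
  intros Hv H.
  pose (phi := fun a b => qsup (fun r => a = a0 /\ b = b0 /\ r = v)).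
  apply qle_trans with (phi a0 b0); [apply qsup_ub; auto |].
  apply qsup_ub. exists phi. split; [| split; [| reflexivity]].
  - intros a b. apply inDQ_sup. intros s [-> [-> ->]]. exact Hv.
  - intros a c. apply rcomp_le. intro b. apply qcomp_sup_r_le.
    intros s [-> [-> ->]]. apply H.
Qed.

End Residuals.

Lemma lres_pointwise_le {A B B' C C' : Type} (dA : A -> Q) dB dB' dC dC'
  (xi : A -> C -> Q) (xi' : A -> C' -> Q) (phi : A -> B -> Q) (phi' : A -> B' -> Q) b b' c c' :
  dB' b' = dB b -> dC' c' = dC c ->
  (forall a, phi' a b' = phi a b) -> (forall a, xi' a c' = xi a c) ->
  Qrel dA dB phi -> Qrel dA dB' phi' ->
  qle (lres dA dB' dC' xi' phi' b' c') (lres dA dB dC xi phi b c).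
Proof.
  intros Hb Hc Hphi Hxi Rphi Rphi'. apply lres_greatest; [exact Rphi | |].
  - rewrite <- Hb, <- Hc. apply lres_inDQ.
  - intro a. rewrite <- Hb, <- Hphi, <- Hxi. apply lres_cancel, Rphi'.
Qed.

Lemma lres_pointwise {A B B' C C' : Type} (dA : A -> Q) dB dB' dC dC'
  (xi : A -> C -> Q) (xi' : A -> C' -> Q) (phi : A -> B -> Q) (phi' : A -> B' -> Q) b b' c c' :
  dB' b' = dB b -> dC' c' = dC c ->
  (forall a, phi' a b' = phi a b) -> (forall a, xi' a c' = xi a c) ->
  Qrel dA dB phi -> Qrel dA dB' phi' ->
  lres dA dB' dC' xi' phi' b' c' = lres dA dB dC xi phi b c.
Proof.
  intros Hb Hc Hphi Hxi Rphi Rphi'. apply qle_antisym; apply lres_pointwise_le; auto.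
Qed.

Lemma rres_pointwise_le {A A' B B' C : Type} dA dA' dB dB' (dC : C -> Q)
  (psi : B -> C -> Q) (psi' : B' -> C -> Q) (xi : A -> C -> Q) (xi' : A' -> C -> Q) a a' b b' :
  dA' a' = dA a -> dB' b' = dB b ->
  (forall c, psi' b' c = psi b c) -> (forall c, xi' a' c = xi a c) ->
  qle (rres dA' dB' dC psi' xi' a' b') (rres dA dB dC psi xi a b).
Proof.
  intros Ha Hb Hpsi Hxi. apply rres_greatest.
  - rewrite <- Ha, <- Hb. apply rres_inDQ.
  - intro c. rewrite <- Hb, <- Hpsi, <- Hxi. apply rres_cancel.
Qed.

Lemma rres_pointwise {A A' B B' C : Type} dA dA' dB dB' (dC : C -> Q)
  (psi : B -> C -> Q) (psi' : B' -> C -> Q) (xi : A -> C -> Q) (xi' : A' -> C -> Q) a a' b b' :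
  dA' a' = dA a -> dB' b' = dB b ->
  (forall c, psi' b' c = psi b c) -> (forall c, xi' a' c = xi a c) ->
  rres dA' dB' dC psi' xi' a' b' = rres dA dB dC psi xi a b.
Proof.
  intros Ha Hb Hpsi Hxi. apply qle_antisym; apply rres_pointwise_le; auto.
Qed.

End Relations.

Section GaloisConnections.
Context {Q : Quantale}.

Definition qtransitive {T : Type} (d : T -> Q) (r : T -> T -> Q) : Prop :=
  forall a b c, qle (qcomp (d b) (r b c) (r a b)) (r a c).

Lemma qorder_preserving_comp {A B C : Type} dA dB (dC : C -> Q) rA rB rC
  (h : A -> B) (k : B -> C) :
  qorder_preserving dA dB rA rB h -> qorder_preserving dB dC rB rC k ->
  qorder_preserving dA dC rA rC (fun a => k (h a)).
Proof.
  intros [Hd Hr] [Kd Kr]. split.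
  - intro a. rewrite Kd. apply Hd.
  - intros a a'. eapply qle_trans; [apply Hr | apply Kr].
Qed.

Lemma qgalois_hom {A B : Type} dA dB (rA : A -> A -> Q) rB (f : A -> B) (g : B -> A) :
  (forall a a', inDQ (dA a) (dA a') (rA a a')) -> qtransitive dA rA -> qtransitive dB rB ->
  qgalois dA dB rA rB f g -> forall a b, rB (f a) b = rA a (g b).
Proof.
  intros HA TA TB [[Fd Fm] [[Gd Gm] [Hunit Hcounit]]] a b. apply qle_antisym.
  - eapply qle_trans; [apply Gm |].
    eapply qle_trans; [| apply (TA a (g (f a)) (g b))].
    apply qcomp_ge_l; [exact (proj1 (HA _ _)) |]. rewrite Gd, Fd. apply Hunit.
  - eapply qle_trans; [apply Fm |].
    eapply qle_trans; [| apply (TB (f a) (f (g b)) b)].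
    apply qcomp_ge_r. rewrite Fd, Gd. apply Hcounit.
Qed.

End GaloisConnections.

Section PresheafOrders.
Context {Q : Quantale} {X : QPO Q}.

Lemma qdeg_le_qpre (x : X) : qle (qdeg X x) (qpre X x x).
Proof. eapply qle_trans; [| apply (qpre_refl x x)]. apply qsup_ub. auto. Qed.

Lemma PX_pre_inDQ (m m' : PX X) : inDQ (px_deg m) (px_deg m') (PX_pre m m').
Proof. exact (lres_inDQ _ (done _) (done _) _ _ tt tt). Qed.

Lemma PX_pre_cancel (m m' : PX X) x :
  qle (qcomp (px_deg m) (PX_pre m m') (px_rel m x tt)) (px_rel m' x tt).
Proof. exact (lres_cancel _ (done _) (done _) _ _ x tt tt (px_isrel m)). Qed.

Lemma PX_pre_greatest (m m' : PX X) v :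
  inDQ (px_deg m) (px_deg m') v ->
  (forall x, qle (qcomp (px_deg m) v (px_rel m x tt)) (px_rel m' x tt)) ->
  qle v (PX_pre m m').
Proof. exact (lres_greatest _ (done _) (done _) _ _ tt tt v (px_isrel m)). Qed.

Lemma PX_pre_trans : qtransitive px_deg (@PX_pre Q X).
Proof.
  intros m m' m''. apply PX_pre_greatest.
  - exact (inDQ_qcomp (PX_pre_inDQ m' m'') (PX_pre_inDQ m m')).
  - intro x.
    rewrite qcompA by (exact (proj1 (PX_pre_inDQ m m')) || exact (proj2 (px_isrel m x tt))).
    eapply qle_trans; [apply qcomp_le_r, PX_pre_cancel | apply PX_pre_cancel].
Qed.

Lemma PX_pre_deg_iff (m m' : PX X) : px_deg m' = px_deg m ->
  qle (px_deg m) (PX_pre m m') <-> forall x, qle (px_rel m x tt) (px_rel m' x tt).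
Proof.
  intro Hdeg. split.
  - intros H x. eapply qle_trans; [apply (qcomp_ge_r _ _ _ H) | apply PX_pre_cancel].
  - intro H. apply PX_pre_greatest; [rewrite Hdeg; apply inDQ_refl |].
    intro x. rewrite qcomp_id_l; [apply H | exact (proj2 (px_isrel m x tt))].
Qed.

Lemma PdX_pre_inDQ (l l' : PdX X) : inDQ (pdx_deg l) (pdx_deg l') (PdX_pre l l').
Proof. exact (rres_inDQ (done _) (done _) _ _ _ tt tt). Qed.

Lemma PdX_pre_cancel (l l' : PdX X) x :
  qle (qcomp (pdx_deg l') (pdx_rel l' tt x) (PdX_pre l l')) (pdx_rel l tt x).
Proof. exact (rres_cancel (done _) (done _) _ _ _ tt tt x). Qed.

Lemma PdX_pre_greatest (l l' : PdX X) v :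
  inDQ (pdx_deg l) (pdx_deg l') v ->
  (forall x, qle (qcomp (pdx_deg l') (pdx_rel l' tt x) v) (pdx_rel l tt x)) ->
  qle v (PdX_pre l l').
Proof. exact (rres_greatest (done _) (done _) _ _ _ tt tt v). Qed.

Lemma PdX_pre_trans : qtransitive pdx_deg (@PdX_pre Q X).
Proof.
  intros l l' l''. apply PdX_pre_greatest.
  - exact (inDQ_qcomp (PdX_pre_inDQ l' l'') (PdX_pre_inDQ l l')).
  - intro x.
    rewrite <- qcompA by (exact (proj1 (PdX_pre_inDQ l' l'')) || exact (proj2 (PdX_pre_inDQ l l'))).
    eapply qle_trans; [apply qcomp_le_l, PdX_pre_cancel | apply PdX_pre_cancel].
Qed.

(* The order of [PdX] is reversed with respect to the pointwise order. *)
Lemma PdX_pre_deg_iff (l l' : PdX X) : pdx_deg l' = pdx_deg l ->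
  qle (pdx_deg l) (PdX_pre l l') <-> forall x, qle (pdx_rel l' tt x) (pdx_rel l tt x).
Proof.
  intro Hdeg. split.
  - intros H x. eapply qle_trans; [| apply PdX_pre_cancel].
    apply qcomp_ge_l; [exact (proj1 (pdx_isrel l' tt x)) | rewrite Hdeg; exact H].
  - intro H. apply PdX_pre_greatest; [rewrite Hdeg; apply inDQ_refl |].
    intro x. rewrite Hdeg, qcomp_id_r; [apply H |].
    rewrite <- Hdeg. exact (proj1 (pdx_isrel l' tt x)).
Qed.

Definition yoneda (x : X) : PX X :=
  {| px_deg := qdeg X x; px_rel := fun a _ => qpre X a x;
     px_isrel := fun a _ => qpre_rel a x; px_dist := fun a _ => qpre_trans a x |}.

Definition coyoneda (x : X) : PdX X :=
  {| pdx_deg := qdeg X x; pdx_rel := fun _ a => qpre X x a;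
     pdx_isrel := fun _ a => qpre_rel x a; pdx_dist := fun _ a => qpre_trans x a |}.

Lemma PX_pre_yoneda (x : X) (m : PX X) : PX_pre (yoneda x) m = px_rel m x tt.
Proof.
  apply qle_antisym.
  - eapply qle_trans; [| apply (PX_pre_cancel (yoneda x) m x)].
    apply qcomp_ge_l; [exact (proj1 (PX_pre_inDQ _ _)) | apply qdeg_le_qpre].
  - apply PX_pre_greatest; [exact (px_isrel m x tt) |].
    intro a. eapply qle_trans; [| apply px_dist].
    apply (rcomp_ge (qdeg X) (px_rel m) (qpre X) a x tt).
Qed.

Lemma PdX_pre_coyoneda (l : PdX X) (x : X) : PdX_pre l (coyoneda x) = pdx_rel l tt x.
Proof.
  apply qle_antisym.
  - eapply qle_trans; [| apply (PdX_pre_cancel l (coyoneda x) x)].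
    apply qcomp_ge_r, qdeg_le_qpre.
  - apply PdX_pre_greatest; [exact (pdx_isrel l tt x) |].
    intro a. eapply qle_trans; [| apply pdx_dist].
    apply (rcomp_ge (qdeg X) (qpre X) (pdx_rel l) tt x a).
Qed.

Lemma yoneda_order_preserving :
  qorder_preserving (qdeg X) px_deg (qpre X) (@PX_pre Q X) yoneda.
Proof. split; [reflexivity |]. intros x x'. rewrite PX_pre_yoneda. apply qle_refl. Qed.

Lemma coyoneda_order_preserving :
  qorder_preserving (qdeg X) pdx_deg (qpre X) (@PdX_pre Q X) coyoneda.
Proof. split; [reflexivity |]. intros x x'. rewrite PdX_pre_coyoneda. apply qle_refl. Qed.

End PresheafOrders.

Section Distributors.
Context {Q : Quantale}.

Lemma qdistributor_intro {X Y : QPO Q} (phi : X -> Y -> Q) : Qrel (qdeg X) (qdeg Y) phi ->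
  (forall x x' y, qle (qcomp (qdeg X x') (phi x' y) (qpre X x x')) (phi x y)) ->
  (forall x y y', qle (qcomp (qdeg Y y') (qpre Y y' y) (phi x y')) (phi x y)) ->
  qdistributor phi.
Proof.
  intros Hphi HX HY. split; [exact Hphi |]. intros x y. apply rcomp_le. intro y'.
  eapply qle_trans; [| apply (HY x y y')]. apply qcomp_le_r.
  apply rcomp_le. intro x'. apply HX.
Qed.

Lemma qdistributor_absorb_dom {X Y : QPO Q} {phi : X -> Y -> Q} : qdistributor phi ->
  forall x x' y, qle (qcomp (qdeg X x') (phi x' y) (qpre X x x')) (phi x y).
Proof.
  intros [_ Hdist] x x' y. eapply qle_trans; [| apply Hdist].
  eapply qle_trans; [| apply (rcomp_ge (qdeg Y) (qpre Y) _ x y y)].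
  eapply qle_trans; [| apply qcomp_ge_r, qdeg_le_qpre].
  apply (rcomp_ge (qdeg X) phi (qpre X) x x' y).
Qed.

Lemma qdistributor_absorb_cod {X Y : QPO Q} {phi : X -> Y -> Q} : qdistributor phi ->
  forall x y y', qle (qcomp (qdeg Y y') (qpre Y y' y) (phi x y')) (phi x y).
Proof.
  intros [Hphi Hdist] x y y'. eapply qle_trans; [| apply Hdist].
  eapply qle_trans; [| apply (rcomp_ge (qdeg Y) (qpre Y) _ x y' y)].
  apply qcomp_le_r. eapply qle_trans; [| apply (rcomp_ge (qdeg X) phi (qpre X) x x y')].
  apply qcomp_ge_l; [exact (proj1 (Hphi x y')) | apply qdeg_le_qpre].
Qed.

Lemma qdistributor_of_PdX_valued {X Y : QPO Q} (F : X -> PdX Y) :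
  qorder_preserving (qdeg X) pdx_deg (qpre X) (@PdX_pre Q Y) F ->
  qdistributor (fun x y => pdx_rel (F x) tt y).
Proof.
  intros [Fd Fm]. apply qdistributor_intro.
  - intros x y. rewrite <- (Fd x). exact (pdx_isrel (F x) tt y).
  - intros x x' y. rewrite <- (Fd x').
    eapply qle_trans; [apply qcomp_le_r, Fm | apply PdX_pre_cancel].
  - intros x y y'. eapply qle_trans; [| apply pdx_dist].
    apply (rcomp_ge (qdeg Y) (qpre Y) (pdx_rel (F x)) tt y' y).
Qed.

Lemma qdistributor_of_PX_valued {X Y : QPO Q} (F : X -> PX Y) :
  qorder_preserving (qdeg X) px_deg (qpre X) (@PX_pre Q Y) F ->
  qdistributor (fun y x => px_rel (F x) y tt).
Proof.
  intros [Fd Fm]. apply qdistributor_intro.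
  - intros y x. rewrite <- (Fd x). exact (px_isrel (F x) y tt).
  - intros y y' x. eapply qle_trans; [| apply px_dist].
    apply (rcomp_ge (qdeg Y) (px_rel (F x)) (qpre Y) y y' tt).
  - intros y x x'. rewrite <- (Fd x').
    eapply qle_trans; [apply qcomp_le_l, Fm | apply PX_pre_cancel].
Qed.

Definition dist_ustar_PX {X Y : QPO Q} {phi : Y -> X -> Q} (Hphi : qdistributor phi) (m : PX X)
  : PX Y :=
  {| px_deg := px_deg m; px_rel := dist_ustar phi m;
     px_isrel := Qrel_rcomp _ _ _ _ _ (px_isrel m) (proj1 Hphi);
     px_dist := rcomp_absorb_r _ _ _ _ _ (proj1 Hphi) (@qpre_rel Q Y)
                  (qdistributor_absorb_dom Hphi) |}.

Definition dist_udag_PdX {X Y : QPO Q} {phi : Y -> X -> Q} (Hphi : qdistributor phi) (l : PdX Y)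
  : PdX X :=
  {| pdx_deg := pdx_deg l; pdx_rel := dist_udag phi l;
     pdx_isrel := Qrel_rcomp _ _ _ _ _ (proj1 Hphi) (pdx_isrel l);
     pdx_dist := rcomp_absorb_l _ _ _ _ _ (fun y x => proj1 (proj1 Hphi y x))
                   (fun u y => proj2 (pdx_isrel l u y)) (qdistributor_absorb_cod Hphi) |}.

End Distributors.

Section Polarity.
Context {Q : Quantale} {X Y : QPO Q} (f : PX X -> PdX Y) (g : PdX Y -> PX X).
Hypothesis Hfg : qgalois px_deg pdx_deg (@PX_pre Q X) (@PdX_pre Q Y) f g.

Definition polarity_dist (x : X) (y : Y) : Q := pdx_rel (f (yoneda x)) tt y.

Lemma polarity_hom m l : PdX_pre (f m) l = PX_pre m (g l).
Proof.
  exact (qgalois_hom _ _ _ _ f g PX_pre_inDQ PX_pre_trans PdX_pre_trans Hfg _ _).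
Qed.

Lemma polarity_dist_qdistributor : qdistributor polarity_dist.
Proof.
  apply (qdistributor_of_PdX_valued (fun x => f (yoneda x))).
  exact (qorder_preserving_comp _ _ _ _ _ _ _ _ yoneda_order_preserving (proj1 Hfg)).
Qed.

Lemma polarity_dist_coyoneda x y : px_rel (g (coyoneda y)) x tt = polarity_dist x y.
Proof. rewrite <- PX_pre_yoneda, <- polarity_hom. apply PdX_pre_coyoneda. Qed.

Lemma polarity_left m :
  pdx_deg (f m) = px_deg m /\ forall u y, pdx_rel (f m) u y = dist_up polarity_dist m u y.
Proof.
  split; [apply (proj1 (proj1 Hfg)) |]. intros [] y.
  rewrite <- PdX_pre_coyoneda, polarity_hom. unfold PX_pre, dist_up.
  apply lres_pointwise; try reflexivity; try apply px_isrel.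
  - apply (proj1 (proj1 (proj2 Hfg))).
  - intro x. apply polarity_dist_coyoneda.
Qed.

Lemma polarity_right l :
  px_deg (g l) = pdx_deg l /\ forall x u, px_rel (g l) x u = dist_down polarity_dist l x u.
Proof.
  split; [apply (proj1 (proj1 (proj2 Hfg))) |]. intros x [].
  rewrite <- PX_pre_yoneda, <- polarity_hom. unfold PdX_pre, dist_down.
  apply rres_pointwise; try reflexivity.
  apply (proj1 (proj1 Hfg)).
Qed.

End Polarity.

Section Axiality.
Context {Q : Quantale} {X Y : QPO Q} (f : PX X -> PX Y) (g : PX Y -> PX X).
Hypothesis Hfg : qgalois px_deg px_deg (@PX_pre Q X) (@PX_pre Q Y) f g.

Definition axiality_dist (y : Y) (x : X) : Q := px_rel (f (yoneda x)) y tt.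

Lemma axiality_hom m n : PX_pre (f m) n = PX_pre m (g n).
Proof.
  exact (qgalois_hom _ _ _ _ f g PX_pre_inDQ PX_pre_trans PX_pre_trans Hfg _ _).
Qed.

Lemma axiality_dist_qdistributor : qdistributor axiality_dist.
Proof.
  apply (qdistributor_of_PX_valued (fun x => f (yoneda x))).
  exact (qorder_preserving_comp _ _ _ _ _ _ _ _ yoneda_order_preserving (proj1 Hfg)).
Qed.

Lemma axiality_right n :
  px_deg (g n) = px_deg n /\ forall x u, px_rel (g n) x u = dist_lstar axiality_dist n x u.
Proof.
  split; [apply (proj1 (proj1 (proj2 Hfg))) |]. intros x [].
  rewrite <- PX_pre_yoneda, <- axiality_hom. unfold PX_pre, dist_lstar.
  apply lres_pointwise; try reflexivity.
  - apply (proj1 (proj1 Hfg)).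
  - exact (proj1 axiality_dist_qdistributor).
  - apply px_isrel.
Qed.

Lemma axiality_left_ge m y : qle (dist_ustar axiality_dist m y tt) (px_rel (f m) y tt).
Proof.
  apply rcomp_le. intro x.
  eapply qle_trans; [| apply (PX_pre_cancel (f (yoneda x)) (f m) y)].
  rewrite (proj1 (proj1 Hfg) (yoneda x)), <- (PX_pre_yoneda x m).
  apply qcomp_le_l, (proj1 Hfg).
Qed.

(* [f m] is below [m o phi] because [m] is below [g (m o phi)], by adjointness. *)
Lemma axiality_left_le m y : qle (px_rel (f m) y tt) (dist_ustar axiality_dist m y tt).
Proof.
  pose (C := dist_ustar_PX axiality_dist_qdistributor m).
  change (dist_ustar axiality_dist m y tt) with (px_rel C y tt). revert y.
  apply PX_pre_deg_iff; [symmetry; apply (proj1 (proj1 Hfg)) |].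
  rewrite axiality_hom, (proj1 (proj1 Hfg) m).
  apply PX_pre_deg_iff; [apply (proj1 (proj1 (proj2 Hfg))) |]. intro x.
  rewrite (proj2 (axiality_right C) x tt). unfold dist_lstar.
  apply lres_greatest; [exact (proj1 axiality_dist_qdistributor) | exact (px_isrel m x tt) |].
  intro y. apply (rcomp_ge (qdeg X) (px_rel m) axiality_dist y x tt).
Qed.

Lemma axiality_left m :
  px_deg (f m) = px_deg m /\ forall y u, px_rel (f m) y u = dist_ustar axiality_dist m y u.
Proof.
  split; [apply (proj1 (proj1 Hfg)) |]. intros y [].
  apply qle_antisym; [apply axiality_left_le | apply axiality_left_ge].
Qed.

End Axiality.

Section DualAxiality.
Context {Q : Quantale} {X Y : QPO Q} (f : PdX X -> PdX Y) (g : PdX Y -> PdX X).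
Hypothesis Hfg : qgalois pdx_deg pdx_deg (@PdX_pre Q X) (@PdX_pre Q Y) f g.

Definition dual_axiality_dist (y : Y) (x : X) : Q := pdx_rel (g (coyoneda y)) tt x.

Lemma dual_axiality_hom l l' : PdX_pre (f l) l' = PdX_pre l (g l').
Proof.
  exact (qgalois_hom _ _ _ _ f g PdX_pre_inDQ PdX_pre_trans PdX_pre_trans Hfg _ _).
Qed.

Lemma dual_axiality_dist_qdistributor : qdistributor dual_axiality_dist.
Proof.
  apply (qdistributor_of_PdX_valued (fun y => g (coyoneda y))).
  exact (qorder_preserving_comp _ _ _ _ _ _ _ _ coyoneda_order_preserving (proj1 (proj2 Hfg))).
Qed.

Lemma dual_axiality_left l :
  pdx_deg (f l) = pdx_deg l /\ forall u y, pdx_rel (f l) u y = dist_ldag dual_axiality_dist l u y.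
Proof.
  split; [apply (proj1 (proj1 Hfg)) |]. intros [] y.
  rewrite <- PdX_pre_coyoneda, dual_axiality_hom. unfold PdX_pre, dist_ldag.
  apply rres_pointwise; try reflexivity.
  apply (proj1 (proj1 (proj2 Hfg))).
Qed.

Lemma dual_axiality_right_ge l x :
  qle (dist_udag dual_axiality_dist l tt x) (pdx_rel (g l) tt x).
Proof.
  apply rcomp_le. intro y.
  eapply qle_trans; [| apply (PdX_pre_cancel (g l) (g (coyoneda y)) x)].
  rewrite (proj1 (proj1 (proj2 Hfg)) (coyoneda y)), <- (PdX_pre_coyoneda l y).
  apply qcomp_le_r, (proj1 (proj2 Hfg)).
Qed.

(* [phi o l] is below [g l] in [PdX X] because [f (phi o l)] is below [l], by adjointness. *)
Lemma dual_axiality_right_le l x :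
  qle (pdx_rel (g l) tt x) (dist_udag dual_axiality_dist l tt x).
Proof.
  pose (C := dist_udag_PdX dual_axiality_dist_qdistributor l).
  change (dist_udag dual_axiality_dist l tt x) with (pdx_rel C tt x). revert x.
  apply PdX_pre_deg_iff; [apply (proj1 (proj1 (proj2 Hfg))) |].
  rewrite <- dual_axiality_hom, <- (proj1 (proj1 Hfg) C).
  apply PdX_pre_deg_iff; [symmetry; apply (proj1 (proj1 Hfg)) |]. intro y.
  rewrite (proj2 (dual_axiality_left C) tt y). unfold dist_ldag.
  apply rres_greatest; [exact (pdx_isrel l tt y) |].
  intro x. apply (rcomp_ge (qdeg Y) dual_axiality_dist (pdx_rel l) tt y x).
Qed.

Lemma dual_axiality_right l :
  pdx_deg (g l) = pdx_deg l /\ forall u x, pdx_rel (g l) u x = dist_udag dual_axiality_dist l u x.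
Proof.
  split; [apply (proj1 (proj1 (proj2 Hfg))) |]. intros [] x.
  apply qle_antisym; [apply dual_axiality_right_le | apply dual_axiality_right_ge].
Qed.

End DualAxiality.

Theorem proposition4p23 (Q : Quantale) (X Y : QPO Q) :
  (* (1) Q-polarities *)
  (forall (f : PX X -> PdX Y) (g : PdX Y -> PX X),
     qgalois (@px_deg Q X) (@pdx_deg Q Y) (@PX_pre Q X) (@PdX_pre Q Y) f g ->
     exists phi : X -> Y -> Q, qdistributor phi /\
       (forall m, pdx_deg (f m) = px_deg m /\
          forall u y, pdx_rel (f m) u y = dist_up phi m u y) /\
       (forall l, px_deg (g l) = pdx_deg l /\
          forall x u, px_rel (g l) x u = dist_down phi l x u)) /\
  (* (2) Q-axialities *)
  (forall (f : PX X -> PX Y) (g : PX Y -> PX X),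
     qgalois (@px_deg Q X) (@px_deg Q Y) (@PX_pre Q X) (@PX_pre Q Y) f g ->
     exists phi : Y -> X -> Q, qdistributor phi /\
       (forall m, px_deg (f m) = px_deg m /\
          forall y u, px_rel (f m) y u = dist_ustar phi m y u) /\
       (forall m, px_deg (g m) = px_deg m /\
          forall x u, px_rel (g m) x u = dist_lstar phi m x u)) /\
  (* (3) dual Q-axialities *)
  (forall (f : PdX X -> PdX Y) (g : PdX Y -> PdX X),
     qgalois (@pdx_deg Q X) (@pdx_deg Q Y) (@PdX_pre Q X) (@PdX_pre Q Y) f g ->
     exists phi : Y -> X -> Q, qdistributor phi /\
       (forall l, pdx_deg (f l) = pdx_deg l /\
          forall u y, pdx_rel (f l) u y = dist_ldag phi l u y) /\
       (forall l, pdx_deg (g l) = pdx_deg l /\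
          forall u x, pdx_rel (g l) u x = dist_udag phi l u x)).
Proof.
  split; [| split]; intros f g Hfg.
  - exists (polarity_dist f).
    exact (conj (polarity_dist_qdistributor f g Hfg)
             (conj (polarity_left f g Hfg) (polarity_right f g Hfg))).
  - exists (axiality_dist f).
    exact (conj (axiality_dist_qdistributor f g Hfg)
             (conj (axiality_left f g Hfg) (axiality_right f g Hfg))).
  - exists (dual_axiality_dist g).
    exact (conj (dual_axiality_dist_qdistributor f g Hfg)
             (conj (dual_axiality_left f g Hfg) (dual_axiality_right f g Hfg))).
Qed.
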